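(* Let $\mathbf A$ be a pseudo-Kleene lattice. Then $\mathbf A$ satisfies (SP2) if and only if, for all $x,y\in A$ with $x\leq y$: (1) $\pi_{0_{x,y}}(x)$ and $\pi_{0_{x,y}}(y)$ are sharp elements of $\mathbf{Local}(x,y)$; and (2) $(\mathrm{Sh}(\mathbf{Local}(x,y)),\leq,{}',0_{x,y},1_{x,y})$ is an orthogonal poset.
   Context: A pseudo-Kleene lattice is an algebra $(A,\land,\lor,{}',0,1)$ that is a bounded lattice with an antitone involution ${}'$ ($x\leq y\Rightarrow y'\leq x'$, $x''=x$) satisfying $x\land x'\leq y\lor y'$. (SP2): for all $x,y$, $x\leq y$ implies $(x\land x')\lor(y\land y')=(x'\land y)\land(x'\land y)'$. For $x,y\in A$ put $0_{x,y}=(x\land x')\lor(y\land y')$, $1_{x,y}=(x\lor x')\land(y\lor y')$, and for $z,w\in A$, $\pi_z(w)=(w\land(z\lor z'))\lor(z\land z')$. The localizer $\mathbf{Local}(x,y)$ is the pseudo-Kleene lattice on the interval $[0_{x,y},1_{x,y}]$ with $\land,\lor,{}'$ inherited from $\mathbf A$ and bounds $0_{x,y},1_{x,y}$. An element $u$ of a pseudo-Kleene lattice with bottom $b$ is sharp if $u\land u'=b$; $\mathrm{Sh}(\cdot)$ is the set of sharp elements. An orthogonal poset is a bounded poset with antitone involution ${}'$ in which $u\land u'$ is the bottom for every $u$ (meet existing) and, whenever $u\leq v'$, the join $u\lor v$ exists; here order and joins in $\mathrm{Sh}(\mathbf{Local}(x,y))$ are understood as those inherited from $\mathbf{Local}(x,y)$,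 i.e. for sharp $u\leq v'$ the element $u\lor v$ is sharp. *)

(* a pseudo-Kleene lattice is a bounded lattice
   (tbLatticeType) together with a unary operation [c] (the involution ')
   satisfying the axioms in [pseudo_kleene]. *)
From HB Require Import structures.
From mathcomp Require Import all_boot all_order.
Set Implicit Arguments. Unset Strict Implicit. Unset Printing Implicit Defensive.
Import Order.LTheory.
Local Open Scope order_scope.

Section PK.
Context {disp : Order.disp_t} {L : tbLatticeType disp}.
Variable c : L -> L.

Definition pseudo_kleene : Prop :=
  [/\ (forall x y : L, x <= y -> c y <= c x),
      (forall x : L, c (c x) = x) &
      (forall x y : L, x `&` c x <= y `|` c y)].

Definition SP2 : Prop :=
  forall x y : L, x <= y ->
    (x `&` c x) `|` (y `&` c y) = (c x `&` y) `&` c (c x `&` y).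

Definition zero_xy (x y : L) : L := (x `&` c x) `|` (y `&` c y).
Definition one_xy (x y : L) : L := (x `|` c x) `&` (y `|` c y).

Definition proj (z w : L) : L := (w `&` (z `|` c z)) `|` (z `&` c z).

Definition in_local (x y u : L) : Prop := zero_xy x y <= u /\ u <= one_xy x y.

(* u is a sharp element of Local(x,y) (whose bottom is 0_{x,y}) *)
Definition sharp_local (x y u : L) : Prop :=
  in_local x y u /\ u `&` c u = zero_xy x y.

(* (S, <=, ', b, t) is an orthogonal poset, where S is a subset of L with
   order, involution, meets and joins inherited from L:
   b and t belong to S and bound it, S is closed under ', u /\ u' = b for
   u in S, and for u, v in S with u <= v' the join u \/ v lies in S. *)
Definition orthogonal_sub (S : L -> Prop) (b t : L) : Prop :=
  S b /\ S t /\
  (forall u, S u -> b <= u /\ u <= t) /\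
  (forall u, S u -> S (c u)) /\
  (forall u, S u -> u `&` c u = b) /\
  (forall u v, S u -> S v -> u <= c v -> S (u `|` v)).

End PK.

(* An antitone involution satisfies the De Morgan laws, so with
   [k w := w /\ w'] the element [0_{x,y}] is [k x \/ k y] and, for [x <= y],
   [pi(x) = x \/ k y] and [pi(y)' = y' \/ k x].  (SP2) says exactly that
   [k (x \/ y') = 0_{x,y}] for [x <= y], i.e. that [k] turns joins of
   orthogonal elements into joins.  Applied to [pi(x)], [pi(y)'] and to two
   orthogonal sharp elements of [Local(x,y)], this gives (1) and (2).
   Conversely [pi(x) <= pi(y)], and the orthogonal join [pi(x) \/ pi(y)']
   equals [x \/ y'], whose sharpness is (SP2). *)
From HB Require Import structures.
From mathcomp Require Import all_boot all_order.
Import Order.LTheory.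
Local Open Scope order_scope.

Section PseudoKleene.
Context {disp : Order.disp_t} {L : tbLatticeType disp}.
Context {c : L -> L} (hPK : pseudo_kleene c).

Lemma cK (x : L) : c (c x) = x.
Proof. by case: hPK. Qed.

Lemma leC (x y : L) : (c x <= c y) = (y <= x).
Proof.
have [anti _ _] := hPK.
by apply/idP/idP => [/anti|/anti //]; rewrite !cK.
Qed.

Lemma meet_c_le_join_c (x y : L) : x `&` c x <= y `|` c y.
Proof. by case: hPK. Qed.

Lemma cU (x y : L) : c (x `|` y) = c x `&` c y.
Proof.
apply/le_anti/andP; split; first by rewrite lexI !leC leUl leUr.
rewrite -[_ `&` _]cK leC leUx -{1}[x]cK leC leIl /=.
by rewrite -{1}[y]cK leC leIr.
Qed.

Lemma cI (x y : L) : c (x `&` y) = c x `|` c y.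
Proof. by rewrite -[x]cK -[y]cK -cU !cK. Qed.

Lemma meet_cC (w : L) : c w `&` c (c w) = w `&` c w.
Proof. by rewrite cK meetC. Qed.

Lemma meet_c_idem (w : L) : (w `&` c w) `&` c (w `&` c w) = w `&` c w.
Proof. by apply/meet_idPl; rewrite cI cK joinC meet_c_le_join_c. Qed.

Lemma zero_le_one_xy (x y : L) : zero_xy c x y <= one_xy c x y.
Proof. by rewrite leUx !lexI !meet_c_le_join_c. Qed.

Lemma c_zero_xy (x y : L) : c (zero_xy c x y) = one_xy c x y.
Proof. by rewrite cU !cI !cK [c x `|` x]joinC [c y `|` y]joinC. Qed.

Lemma c_one_xy (x y : L) : c (one_xy c x y) = zero_xy c x y.
Proof. by rewrite -c_zero_xy cK. Qed.

Lemma proj_zero_xyE (x y w : L) :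
  proj c (zero_xy c x y) w = (w `&` one_xy c x y) `|` zero_xy c x y.
Proof.
rewrite /proj c_zero_xy (join_idPr (zero_le_one_xy x y)).
by rewrite (meet_idPl (zero_le_one_xy x y)).
Qed.

Lemma le_proj (z w1 w2 : L) : w1 <= w2 -> proj c z w1 <= proj c z w2.
Proof. by move=> le_w; rewrite leU2 ?leI2. Qed.

Lemma proj_in_local (x y w : L) : in_local c x y (proj c (zero_xy c x y) w).
Proof.
by rewrite proj_zero_xyE; split; rewrite ?leUr // leUx leIr zero_le_one_xy.
Qed.

Lemma proj_zero_xy_l (x y : L) : x <= y ->
  proj c (zero_xy c x y) x = x `|` (y `&` c y).
Proof.
move=> le_xy; rewrite proj_zero_xyE (meet_idPl _); last first.
  by rewrite lexI leUl (le_trans le_xy) ?leUl.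
by rewrite joinA (join_idPl (leIl x (c x))).
Qed.

Lemma c_proj_zero_xy_r (x y : L) : x <= y ->
  c (proj c (zero_xy c x y) y) = c y `|` (x `&` c x).
Proof.
move=> le_xy; rewrite proj_zero_xyE cU cI c_zero_xy c_one_xy.
have -> : c y `|` zero_xy c x y = c y `|` (x `&` c x).
  by rewrite /zero_xy joinCA (join_idPl (leIr (c y) y)) joinC.
apply/meet_idPl; rewrite leUx !lexI !meet_c_le_join_c leUr !andbT.
by rewrite (le_trans _ (leUr _ _)) ?leC.
Qed.

Lemma proj_join_c_proj (x y : L) : x <= y ->
  proj c (zero_xy c x y) x `|` c (proj c (zero_xy c x y) y) = x `|` c y.
Proof.
move=> le_xy; rewrite proj_zero_xy_l // c_proj_zero_xy_r //.
apply/le_anti/andP; split; last by rewrite leU2 ?leUl.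
rewrite !leUx leUl leUr (le_trans (leIr _ _) (leUr _ _)) /=.
exact: le_trans (leIl _ _) (leUl _ _).
Qed.

Lemma sharp_local_c (x y u : L) :
  sharp_local c x y u -> sharp_local c x y (c u).
Proof.
move=> [[le_zero_u le_u_one] sharp_u]; split; last by rewrite meet_cC.
by split; [rewrite -c_one_xy leC | rewrite -c_zero_xy leC].
Qed.

Lemma join_in_local (x y u v : L) :
  in_local c x y u -> in_local c x y v -> in_local c x y (u `|` v).
Proof.
move=> [le_zero_u le_u_one] [_ le_v_one].
by split; [exact: le_trans le_zero_u (leUl _ _) | rewrite leUx le_u_one].
Qed.

Lemma SP2E : SP2 c <->
  forall x y : L, x <= y -> (x `|` c y) `&` c (x `|` c y) = zero_xy c x y.
Proof.
have sp2_rhsE (x y : L) : (c x `&` y) `&` c (c x `&` y) = (x `|` c y) `&` c (x `|` c y).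
  by rewrite -[y in c x `&` y]cK -cU meet_cC.
by split=> sp2 x y le_xy; [rewrite -sp2_rhsE -sp2 | rewrite sp2_rhsE sp2].
Qed.

Section SP2Theory.
Hypothesis hSP2 : SP2 c.

Lemma SP2_join (u v : L) : u <= c v ->
  (u `|` v) `&` c (u `|` v) = zero_xy c u v.
Proof.
move=> le_u_cv; have := (proj1 SP2E hSP2) u (c v) le_u_cv.
by rewrite cK /zero_xy meet_cC.
Qed.

Lemma sharp_proj_zero_xy_l (x y : L) : x <= y ->
  sharp_local c x y (proj c (zero_xy c x y) x).
Proof.
move=> le_xy; split; first exact: proj_in_local.
rewrite proj_zero_xy_l // SP2_join; first by rewrite /zero_xy meet_c_idem.
by rewrite cI cK (le_trans le_xy) ?leUr.
Qed.

Lemma sharp_proj_zero_xy_r (x y : L) : x <= y ->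
  sharp_local c x y (proj c (zero_xy c x y) y).
Proof.
move=> le_xy; split; first exact: proj_in_local.
rewrite -meet_cC c_proj_zero_xy_r // SP2_join; last first.
  by rewrite cI cK (le_trans _ (leUl _ _)) // leC.
by rewrite /zero_xy meet_c_idem meet_cC joinC.
Qed.

Lemma orthogonal_sharp_local (x y : L) :
  orthogonal_sub c (sharp_local c x y) (zero_xy c x y) (one_xy c x y).
Proof.
have le01 := zero_le_one_xy x y.
have sharp_zero : sharp_local c x y (zero_xy c x y).
  by split; [split|rewrite c_zero_xy; apply/meet_idPl].
split; first exact: sharp_zero.
split; first by rewrite -c_zero_xy; apply: sharp_local_c.
split; first by move=> u [].
split; first exact: sharp_local_c.
split; first by move=> u [].
move=> u v [loc_u sharp_u] [loc_v sharp_v] le_u_cv; split.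
  exact: join_in_local.
by rewrite SP2_join // /zero_xy sharp_u sharp_v joinxx.
Qed.

End SP2Theory.
End PseudoKleene.

Theorem lemma3p20 (disp : Order.disp_t) (L : tbLatticeType disp) (c : L -> L)
  (hPK : pseudo_kleene c) :
  SP2 c <->
  (forall x y : L, x <= y ->
     (sharp_local c x y (proj c (zero_xy c x y) x) /\
      sharp_local c x y (proj c (zero_xy c x y) y)) /\
     orthogonal_sub c (sharp_local c x y) (zero_xy c x y) (one_xy c x y)).
Proof.
split=> [hSP2 x y le_xy|local_sharp].
  split; last exact: (orthogonal_sharp_local hPK hSP2).
  by split; [apply: (sharp_proj_zero_xy_l hPK hSP2)
            | apply: (sharp_proj_zero_xy_r hPK hSP2)].
apply/(SP2E hPK) => x y le_xy.
have [[sharp_px sharp_py] [_ [_ [_ [sharp_c [_ sharp_join]]]]]] :=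
  local_sharp x y le_xy.
have le_px_py : proj c (zero_xy c x y) x <= c (c (proj c (zero_xy c x y) y)).
  by rewrite (cK hPK) le_proj.
have [_] := sharp_join _ _ sharp_px (sharp_c _ sharp_py) le_px_py.
by rewrite (proj_join_c_proj hPK).
Qed.
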